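(* For any positive integers $k,\Delta$ with $3 \le k\le \Delta$ and any positive integers $x_1,\dots,x_k$ with $1\le x_j \le \Delta$, $$ \frac{2}{k-1} \sum_{1\le i<j \le k} \frac1{x_i+x_j+2k-4} \le \sum_{j=1}^k \frac1{x_j+k} \le 2\,\frac{\Delta+2k-3}{k^2-1} \sum_{1\le i<j \le k} \frac1{x_i+x_j+2k-4} \, . $$ *)

From mathcomp Require Import all_boot all_order all_algebra.
Set Implicit Arguments. Unset Strict Implicit. Unset Printing Implicit Defensive.

From mathcomp Require Import all_boot all_order all_algebra.
From mathcomp Require Import zify ring lra.
Import Order.TTheory GRing.Theory Num.Theory.
Local Open Scope ring_scope.

(* Put a_j = x_j + k, so that a_j lies in [k+1, Delta+k] and the pair
   denominators are a_i + a_j - 4.  Each a_j^-1 occurs in exactly k-1 of the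
   sums a_i^-1 + a_j^-1 over pairs i < j, so both inequalities follow by
   summing pairwise bounds: 2/(a+b-4) <= 1/a + 1/b, since
   a(a-4) + b(b-4) >= 0, and 1/a + 1/b <= 2(Delta+2k-3)/((k+1)(a+b-4)).
   Cleared of denominators, the latter is a quadratic that is concave in each
   variable, so it only has to be checked at the corners of the box. *)

Lemma sum_pairsD {V : nmodType} {k : nat} (f : 'I_k -> V) :
  \sum_(i < k) \sum_(j < k | (i < j)%N) (f i + f j) = (\sum_(i < k) f i) *+ k.-1.
Proof.
have swap : \sum_(i < k) \sum_(j < k | (i < j)%N) f j
          = \sum_(i < k) \sum_(j < k | (j < i)%N) f i.
  by rewrite (exchange_big_dep xpredT).
rewrite -sumrMnl; under eq_bigr do rewrite big_split /=.
rewrite big_split /= swap -big_split /=; apply: eq_bigr => i _.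
have <- : #|predC1 i| = k.-1 by rewrite cardC1 card_ord.
rewrite -sumr_const [RHS](bigID (fun j : 'I_k => (i < j)%N)) /=.
by congr (_ + _); apply: eq_bigl => j; rewrite !inE neq_ltn; case: ltngtP.
Qed.

Lemma concave_quadratic_ge0 (R : realDomainType) (f : R -> R) (al be ga lo hi t : R) :
  (forall s, f s = al * s ^+ 2 + be * s + ga) -> al <= 0 ->
  lo <= t <= hi -> 0 <= f lo -> 0 <= f hi -> 0 <= f t.
Proof.
move=> fE al_le0 /andP[lo_t t_hi] f_lo f_hi.
have [lo_hi|lt_lohi] := eqVneq lo hi.
  by have -> : t = lo by apply/le_anti; rewrite lo_t lo_hi t_hi.
have interp : (hi - lo) * f t = (hi - t) * f lo + (t - lo) * f hi
                                + (- al) * (hi - lo) * ((t - lo) * (hi - t)).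
  by rewrite !fE; ring.
have lo_le_hi := le_trans lo_t t_hi.
have : 0 <= (hi - lo) * f t.
  by rewrite interp !addr_ge0 ?mulr_ge0 ?subr_ge0 ?oppr_ge0.
by rewrite pmulr_rge0 // subr_gt0 lt_neqAle lt_lohi.
Qed.

Section PairBounds.
Variable R : realFieldType.
Implicit Types a b K D : R.

Lemma invD_pair_ge a b : 4 <= a -> 4 <= b -> 2 / (a + b - 4) <= a^-1 + b^-1.
Proof.
move=> a_ge4 b_ge4; rewrite -subr_ge0.
have -> : a^-1 + b^-1 - 2 / (a + b - 4)
          = (a * (a - 4) + b * (b - 4)) / (a * b * (a + b - 4)).
  by field; rewrite !(gt_eqF, mulf_neq0) //; lra.
by apply: divr_ge0; [nra | rewrite !mulr_ge0 //; lra].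
Qed.

Definition upper_gap K D a b :=
  2 * (D + 2 * K - 3) * (a * b) - (K + 1) * (a + b) * (a + b - 4).

Lemma upper_gap_sym K D a b : upper_gap K D a b = upper_gap K D b a.
Proof. by rewrite /upper_gap; ring. Qed.

Lemma upper_gap_concave {K D b lo hi a} : 0 <= K + 1 ->
  lo <= a <= hi -> 0 <= upper_gap K D lo b -> 0 <= upper_gap K D hi b ->
  0 <= upper_gap K D a b.
Proof.
move=> K1; apply: (@concave_quadratic_ge0 _ (upper_gap K D ^~ b) (- (K + 1))
  (2 * (D + 2 * K - 3) * b - (K + 1) * (2 * b - 4)) (- (K + 1) * b * (b - 4))).
- by move=> s; rewrite /upper_gap; ring.
- by rewrite oppr_le0.
Qed.

Lemma upper_gap_ge0 K D a b : 3 <= K -> K <= D ->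
  K + 1 <= a <= D + K -> K + 1 <= b <= D + K -> 0 <= upper_gap K D a b.
Proof.
move=> K_ge3 K_leD a_in b_in.
have K1 : 0 <= K + 1 by lra.
have low_low : 0 <= upper_gap K D (K + 1) (K + 1) by rewrite /upper_gap; nra.
have high_low : 0 <= upper_gap K D (D + K) (K + 1) by rewrite /upper_gap; nra.
have high_high : 0 <= upper_gap K D (D + K) (D + K).
  have -> : upper_gap K D (D + K) (D + K) = 2 * (D + K) *
     (2 * K * (K - 3) + (D - K) * (3 * K - 5) + (D - K) ^+ 2 + 4).
    by rewrite /upper_gap; ring.
  by apply: mulr_ge0; nra.
rewrite upper_gap_sym; apply: (upper_gap_concave K1 b_in); rewrite upper_gap_sym;
  apply: (upper_gap_concave K1 a_in) => //.
by rewrite upper_gap_sym.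
Qed.

Lemma invD_pair_le K D a b : 3 <= K -> K <= D ->
  K + 1 <= a <= D + K -> K + 1 <= b <= D + K ->
  a^-1 + b^-1 <= 2 * (D + 2 * K - 3) / (K + 1) * (a + b - 4)^-1.
Proof.
move=> K_ge3 K_leD a_in b_in; rewrite -subr_ge0.
have -> : 2 * (D + 2 * K - 3) / (K + 1) * (a + b - 4)^-1 - (a^-1 + b^-1)
          = upper_gap K D a b / ((K + 1) * a * b * (a + b - 4)).
  by rewrite /upper_gap; field; rewrite !(gt_eqF, mulf_neq0) //; lra.
apply: divr_ge0; first exact: upper_gap_ge0.
by rewrite !mulr_ge0 //; lra.
Qed.

End PairBounds.

Theorem lemma3p3 (R : realFieldType) (k Delta : nat) (x : 'I_k -> nat) :
  (3 <= k)%N -> (k <= Delta)%N ->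
  (forall j, 1 <= x j <= Delta)%N ->
  let S := \sum_(i < k) \sum_(j < k | (i < j)%N)
             ((x i + x j + 2 * k - 4)%:R : R)^-1 in
  2 / (k%:R - 1) * S <= \sum_(j < k) ((x j + k)%:R : R)^-1
  /\ \sum_(j < k) ((x j + k)%:R : R)^-1
     <= 2 * (Delta + 2 * k - 3)%:R / (k%:R ^+ 2 - 1) * S.
Proof.
move=> k_ge3 k_leD x_in S.
pose a j : R := (x j + k)%:R.
set K : R := k%:R; set D : R := Delta%:R.
have K_ge3 : 3 <= K by rewrite (ler_nat R 3).
have K_leD : K <= D by rewrite ler_nat.
have a_in j : K + 1 <= a j <= D + K.
  by rewrite /a /K /D -[1]/(1%:R) -!natrD !ler_nat; have := x_in j; lia.
have a_ge4 j : 4 <= a j by have /andP[] := a_in j; lra.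
have pairE i j : ((x i + x j + 2 * k - 4)%:R : R) = a i + a j - 4.
  by apply: (addIr 4); rewrite subrK -!natrD; congr (_%:R); lia.
have DE : ((Delta + 2 * k - 3)%:R : R) = D + 2 * K - 3.
  by apply: (addIr 3); rewrite subrK -!natrM -!natrD; congr (_%:R); lia.
have pairs := sum_pairsD (fun j => (a j)^-1 : R).
have kE : k.-1%:R = K - 1 :> R by rewrite -subn1 natrB //; lia.
have K1 : 0 < K - 1 by lra.
split.
- rewrite mulrAC ler_pdivrMr // -kE mulr_natr -pairs /S mulr_sumr.
  apply: ler_sum => i _; rewrite mulr_sumr; apply: ler_sum => j _.
  by rewrite pairE invD_pair_ge // ?a_ge4.
- have -> : 2 * (Delta + 2 * k - 3)%:R / (K ^+ 2 - 1) * S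
            = 2 * (D + 2 * K - 3) / (K + 1) * S / (K - 1).
    by rewrite DE; field; rewrite !(gt_eqF, mulf_neq0) //; nra.
  rewrite ler_pdivlMr // -kE mulr_natr -pairs /S mulr_sumr.
  apply: ler_sum => i _; rewrite mulr_sumr; apply: ler_sum => j _.
  by rewrite pairE invD_pair_le.
Qed.
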